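(* For every integer $n\ge 10$ there exists a simple undirected graph $G$ on $n$ vertices whose interlace polynomial $q(G)$ has a non-unimodal coefficient sequence. In particular, there is a graph on 10 vertices with $q(G)=2x+7x^2+6x^3+7x^4+4x^5+3x^6+2x^7+x^8$.
   Context: All graphs are finite, simple and undirected. For a vertex $u$, $G\setminus u$ denotes $G$ with $u$ and all its incident edges removed. For a vertex $v$ with neighbourhood $N_v$, local complementation $G*v$ replaces the induced subgraph of $G$ on $N_v$ by its complement. For an edge $\{u,v\}$, edge local complementation is $G^{(uv)}=G*u*v*u$. The interlace polynomial $q(G)=q(G,x)$ is defined recursively: for the edgeless graph $E_n$ on $n$ vertices, $q(E_n)=x^n$; for any other graph $G$, choose any edge $\{u,v\}$ and set $q(G)=q(G\setminus u)+q(G^{(uv)}\setminus u)$ (independent of the choice of edge). The coefficient sequence $(a_1,\dots,a_d)$ of $q(G)=\sum_{i=1}^d a_ix^i$ is unimodal if there is $k$ with $a_1\le\cdots\le a_k$ and $a_k\ge\cdots\ge a_d$. *)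

From HB Require Import structures.
From mathcomp Require Import all_boot all_order all_algebra.
Set Implicit Arguments. Unset Strict Implicit. Unset Printing Implicit Defensive.
Import GRing.Theory.
Local Open Scope ring_scope.

(* A finite simple graph with vertices labelled by natural numbers:
   [gverts] is the (duplicate-free) vertex list, [gadj] a relation whose
   restriction to distinct vertices of [gverts] gives the edges. *)
Record lgraph := LGraph { gverts : seq nat; gadj : nat -> nat -> bool }.

Definition adjacent (G : lgraph) (x y : nat) : bool :=
  [&& x \in gverts G, y \in gverts G, x != y & gadj G x y || gadj G y x].

Definition gdel (u : nat) (G : lgraph) : lgraph :=
  LGraph [seq w <- gverts G | w != u] (gadj G).

Definition lcomp (v : nat) (G : lgraph) : lgraph :=
  LGraph (gverts G)
    (fun x y => adjacent G x y (+) [&& x != y, adjacent G v x & adjacent G v y]).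

Definition elcomp (u v : nat) (G : lgraph) : lgraph :=
  lcomp u (lcomp v (lcomp u G)).

Definition pick_edge (G : lgraph) : option (nat * nat) :=
  ohead [seq p <- [seq (u, v) | u <- gverts G, v <- gverts G]
         | adjacent G p.1 p.2].

(* The interlace recursion q(G) = q(G\u) + q(G^(uv)\u), q(E_n) = x^n,
   with fuel = number of vertices (each step deletes one vertex). *)
Fixpoint interlace_fuel (fuel : nat) (G : lgraph) : {poly int} :=
  match fuel with
  | 0%N => 'X^(size (gverts G))
  | f.+1 =>
      match pick_edge G with
      | None => 'X^(size (gverts G))
      | Some (u, v) =>
          interlace_fuel f (gdel u G) + interlace_fuel f (gdel u (elcomp u v G))
      end
  end.

Definition interlace (G : lgraph) : {poly int} :=
  let G' := LGraph (undup (gverts G)) (gadj G) in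
  interlace_fuel (size (gverts G')) G'.

Definition graph_of (n : nat) (e : rel 'I_n) : lgraph :=
  LGraph (iota 0 n)
    (fun a b => [exists i : 'I_n, exists j : 'I_n,
                   [&& nat_of_ord i == a, nat_of_ord j == b & e i j]]).

Definition simple_graph (n : nat) (e : rel 'I_n) : Prop :=
  symmetric e /\ irreflexive e.

Definition interlace_poly (n : nat) (e : rel 'I_n) : {poly int} :=
  interlace (graph_of e).

Definition unimodal (p : {poly int}) : Prop :=
  exists k : nat,
    (forall i j : nat, (1 <= i)%N -> (i <= j)%N -> (j <= k)%N -> p`_i <= p`_j) /\
    (forall i j : nat, (k <= i)%N -> (i <= j)%N -> (j <= (size p).-1)%N -> p`_j <= p`_i).

From HB Require Import structures.
From mathcomp Require Import all_boot all_order all_algebra.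
Set Implicit Arguments. Unset Strict Implicit. Unset Printing Implicit Defensive.
Import Order.TTheory GRing.Theory Num.Theory.
Local Open Scope ring_scope.

(* The recursion [interlace_fuel] only looks at the vertex list and the
   adjacency relation of a graph.  We capture this, together with the effect
   of isolated vertices, by one relation: [padding t G H] says that G is H
   plus the new isolated vertices [t].  Padding is preserved by vertex
   deletion and by local complementation, so by induction on the fuel
   q(G) = q(H) * x^|t| (lemma [interlace_fuel_padding]); with [t = [::]] this
   also lets us replace a graph by an extensionally equal one.

   For the 10-vertex example we evaluate the recursion by computation, on
   graphs whose adjacency is tabulated as an edge list, collecting the
   exponents of the monomials at the leaves of the recursion tree.  Its
   coefficients 7, 6, 7 of x^2, x^3, x^4 form a dip, which rules out
   unimodality and survives multiplication by x^(n-10), the contribution of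
   n - 10 isolated vertices. *)

Definition padding (t : seq nat) (G H : lgraph) : Prop :=
  [/\ gverts G = gverts H ++ t, {in t, forall x, x \notin gverts H}
    & adjacent G =2 adjacent H].

Lemma adjacent_sym G x y : adjacent G x y = adjacent G y x.
Proof. by rewrite /adjacent eq_sym orbC; case: (x \in _); case: (y \in _). Qed.

Lemma adjacent_mem G x y : adjacent G x y -> (x \in gverts G) && (y \in gverts G).
Proof. by case/and4P=> -> ->. Qed.

Lemma padding_nil_trans t G H K : padding t G H -> padding [::] H K -> padding t G K.
Proof.
case=> vGH tH aGH [vHK _ aHK]; rewrite cats0 in vHK.
by split=> [|x|x y]; rewrite -?vHK ?aGH ?aHK //; apply: tH.
Qed.

(* Local complementation at any vertex w respects padding: the new vertices
   stay isolated since they have no neighbours, and elsewhere the new adjacency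
   is computed from the old one. *)
Lemma padding_lcomp t w G H : padding t G H -> padding t (lcomp w G) (lcomp w H).
Proof.
case=> vGH tH aGH; split=> // x y; rewrite /adjacent /= vGH !aGH.
have notH z : z \notin gverts H -> forall y, adjacent H z y = false /\ adjacent H y z = false.
  by move=> /negbTE zH y'; split; apply/negbTE/negP => /adjacent_mem; rewrite zH ?andbF.
rewrite !mem_cat.
case: (boolP (x \in gverts H)) => [xH|xH]; last first.
  by case: (notH _ xH y) => -> ->; case: (notH _ xH w) => _ ->; rewrite !andbF.
case: (boolP (y \in gverts H)) => yH //.
by case: (notH _ yH x) => -> ->; case: (notH _ yH w) => _ ->; rewrite !andbF.
Qed.

Lemma adjacent_gdel u G x y :
  adjacent (gdel u G) x y = [&& x != u, y != u & adjacent G x y].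
Proof. by rewrite /adjacent /= !mem_filter; case: (x != u); case: (y != u); rewrite ?andbF. Qed.

Lemma padding_gdel t u G H : u \notin t -> padding t G H -> padding t (gdel u G) (gdel u H).
Proof.
move=> ut [vGH tH aGH]; split=> [|x xt|x y] /=.
- rewrite vGH filter_cat; congr (_ ++ _).
  by apply/all_filterP/allP => w wt; apply: contraNneq ut => <-.
- by rewrite mem_filter negb_and tH ?orbT.
- by rewrite !adjacent_gdel aGH.
Qed.

Lemma filter_pairs_cat (P : pred (nat * nat)) (s t : seq nat) :
  (forall a b, P (a, b) -> (a \notin t) && (b \notin t)) ->
  [seq p <- [seq (x, y) | x <- s ++ t, y <- s ++ t] | P p] =
  [seq p <- [seq (x, y) | x <- s, y <- s] | P p].
Proof.
move=> Pt.
have no_t l1 l2 : {in l1, forall x, x \in t} + {in l2, forall y, y \in t} ->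
    [seq p <- [seq (x, y) | x <- l1, y <- l2] | P p] = [::].
  move=> l_t; rewrite (@eq_in_filter _ _ pred0) ?filter_pred0 //.
  move=> _ /allpairsP[[x y] [/= xl yl ->]]; apply/negbTE/negP => /Pt/andP[xt yt].
  by case: l_t => [/(_ x xl)|/(_ y yl)]; apply/negP.
rewrite allpairs_cat filter_cat (no_t t) ?cats0; last by left.
suff outer l : [seq p <- [seq (x, y) | x <- l, y <- s ++ t] | P p] =
               [seq p <- [seq (x, y) | x <- l, y <- s] | P p] by [].
elim: l => [|x l IH] //=.
have /= := no_t [:: x] t (inr (fun _ yt => yt)); rewrite cats0 => no_xt.
by rewrite !filter_cat map_cat filter_cat no_xt cats0 IH.
Qed.

Lemma padding_pick t G H : padding t G H -> pick_edge G = pick_edge H.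
Proof.
case=> vGH tH aGH; rewrite /pick_edge vGH (eq_filter (fun p => aGH p.1 p.2)).
rewrite filter_pairs_cat // => a b /adjacent_mem /andP[aH bH] /=.
by apply/andP; split; apply/negP => /tH; rewrite ?aH ?bH.
Qed.

Lemma pick_edge_adjacent G u v : pick_edge G = Some (u, v) -> adjacent G u v.
Proof.
rewrite /pick_edge; set l := [seq p <- _ | _].
have : all (fun p => adjacent G p.1 p.2) l by apply: filter_all.
by case: l => //= p l /andP[adj_p _] [p_uv]; rewrite p_uv in adj_p.
Qed.

Lemma interlace_fuel_padding t f G H :
  padding t G H -> interlace_fuel f G = interlace_fuel f H * 'X^(size t).
Proof.
elim: f G H => [|f IH] G H pGH; case: (pGH) => vGH tH _ /=.
  by rewrite vGH size_cat exprD.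
rewrite (padding_pick pGH); case E: pick_edge => [[u v]|]; last first.
  by rewrite vGH size_cat exprD.
have ut : u \notin t.
  by apply/negP => /tH; case/andP: (adjacent_mem (pick_edge_adjacent E)) => ->.
have pdel : padding t (gdel u G) (gdel u H) by exact: padding_gdel.
have pdel_el : padding t (gdel u (elcomp u v G)) (gdel u (elcomp u v H)).
  by apply: padding_gdel => //; do 3!apply: padding_lcomp.
by rewrite mulrDl (IH _ _ pdel) (IH _ _ pdel_el).
Qed.

Lemma size_gdel u G : u \in gverts G -> (size (gverts (gdel u G)) < size (gverts G))%N.
Proof.
move=> uG; rewrite /= size_filter -(count_predC (fun w => w != u)) -{1}[count _ _]addn0.
by rewrite ltn_add2l -has_count; apply/hasP; exists u; rewrite //= negbK.
Qed.

Lemma interlace_fuel_enough f f' G :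
  (size (gverts G) <= f)%N -> (f <= f')%N -> interlace_fuel f G = interlace_fuel f' G.
Proof.
elim: f f' G => [|f IH] [|f'] G //= sizeG ff'.
  by move: sizeG; rewrite leqn0 size_eq0 => /eqP vG; rewrite /pick_edge vG.
case E: pick_edge => [[u v]|] //.
have uG : u \in gverts G by case/andP: (adjacent_mem (pick_edge_adjacent E)).
have sizeGu : (size (gverts (gdel u G)) <= f)%N.
  by rewrite -ltnS; apply: leq_trans (size_gdel uG) sizeG.
by rewrite !(IH f').
Qed.

(* Evaluating [interlace_fuel] by computation: [tabulate G] stores the
   adjacency of G as an explicit edge list, so that iterated local
   complementations do not pile up closures. *)
Definition tabulate (G : lgraph) : lgraph :=
  let edges := [seq p <- [seq (x, y) | x <- gverts G, y <- gverts G] | adjacent G p.1 p.2] in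
  LGraph (gverts G) (fun x y => (x, y) \in edges).

Lemma padding_tabulate G : padding [::] (tabulate G) G.
Proof.
split=> [|//|x y]; first by rewrite cats0.
rewrite /adjacent /= !mem_filter /=.
case: (boolP (x \in gverts G)) => xG //; case: (boolP (y \in gverts G)) => yG //=.
rewrite !allpairs_f // !andbT -/(adjacent G x y) -/(adjacent G y x) adjacent_sym orbb.
by rewrite /adjacent xG yG eq_sym orbC; case: (y != x).
Qed.

Definition elcomp_tab (u v : nat) (G : lgraph) : lgraph :=
  tabulate (lcomp u (tabulate (lcomp v (tabulate (lcomp u G))))).

Lemma padding_elcomp_tab u v G : padding [::] (elcomp_tab u v G) (elcomp u v G).
Proof.
have lcomp_tab w H K : padding [::] H K -> padding [::] (tabulate (lcomp w H)) (lcomp w K).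
  by move=> pHK; apply: padding_nil_trans (padding_tabulate _) (padding_lcomp w pHK).
by do 3!apply: (lcomp_tab); split; rewrite ?cats0.
Qed.

Fixpoint interlace_leaves (f : nat) (G : lgraph) : seq nat :=
  match f with
  | 0%N => [:: size (gverts G)]
  | f.+1 => match pick_edge G with
     | None => [:: size (gverts G)]
     | Some (u, v) => interlace_leaves f (gdel u G) ++ interlace_leaves f (gdel u (elcomp_tab u v G))
     end
  end.

Lemma interlace_fuel_leaves f G : interlace_fuel f G = \sum_(k <- interlace_leaves f G) 'X^k.
Proof.
elim: f G => [|f IH] G /=; first by rewrite big_seq1.
case: pick_edge => [[u v]|]; last by rewrite big_seq1.
rewrite big_cat -!IH (interlace_fuel_padding f (padding_gdel _ (padding_elcomp_tab u v G))) //.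
by rewrite mulr1.
Qed.

Lemma interlace_poly_fuel n (e : rel 'I_n) :
  interlace_poly e = interlace_fuel n (graph_of e).
Proof. by rewrite /interlace_poly /interlace /= undup_id ?iota_uniq // size_iota. Qed.

Definition has_dip (p : {poly int}) (i : nat) : Prop :=
  [/\ (1 <= i)%N, (i.+2 <= (size p).-1)%N, p`_i.+1 < p`_i & p`_i.+1 < p`_i.+2].

Lemma dip_not_unimodal p i : has_dip p i -> ~ unimodal p.
Proof.
case=> i_ge1 i_le dip_l dip_r [k [incr decr]].
case: (leqP k i.+1) => [k_le|k_gt].
  by have := decr _ _ k_le (leqnSn _) i_le; rewrite leNgt dip_r.
by have := incr _ _ i_ge1 (leqnSn _) (ltnW k_gt); rewrite leNgt dip_l.
Qed.

Lemma has_dip_mulXn p i m : has_dip p i -> has_dip (p * 'X^m) (m + i).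
Proof.
case=> i_ge1 i_le dip_l dip_r.
have p_neq0 : p != 0 by apply: contraTneq i_le => ->; rewrite size_poly0.
have coef_shift j : (p * 'X^m)`_(m + j) = p`_j.
  by rewrite coefMXn ltnNge leq_addr addKn.
split; rewrite -?addnS ?coef_shift //; first exact: leq_trans i_ge1 (leq_addl _ _).
by rewrite size_mulXn // -subn1 -addnBA ?size_poly_gt0 // subn1 leq_add2l.
Qed.

Lemma gadj_graph_of n (r : rel nat) x y :
  gadj (graph_of (fun i j : 'I_n => r i j)) x y = [&& (x < n)%N, (y < n)%N & r x y].
Proof.
apply/existsP/and3P => [[i /existsP[j /and3P[/eqP <- /eqP <- rij]]]|[xn yn rxy]].
  by rewrite !ltn_ord.
by exists (Ordinal xn); apply/existsP; exists (Ordinal yn); rewrite !eqxx.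
Qed.

Definition example_edges : seq (nat * nat) :=
  [:: (0,6);(0,7);(1,7);(2,7);(3,6);(3,7);(4,7);(5,6);(5,7);(6,8);(6,9);(7,9)]%N.

Definition example_adj (a b : nat) : bool :=
  ((a, b) \in example_edges) || ((b, a) \in example_edges).

Definition example_rel (n : nat) : rel 'I_n := fun i j => example_adj i j.
Arguments example_rel : clear implicits.

Definition example_poly : {poly int} :=
  2%:R *: 'X + 7%:R *: 'X^2 + 6%:R *: 'X^3 + 7%:R *: 'X^4
  + 4%:R *: 'X^5 + 3%:R *: 'X^6 + 2%:R *: 'X^7 + 'X^8.

Lemma example_simple n : simple_graph (example_rel n).
Proof.
split=> [i j|i]; first by rewrite /example_rel /example_adj orbC.
by rewrite /example_rel /example_adj orbb; case: i => -[|[|[|[|[|[|[|[|[|[|i]]]]]]]]]].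
Qed.

Lemma example_adj_small a b : example_adj a b -> (a < 10)%N && (b < 10)%N.
Proof.
have small : all (fun p => (p.1 < 10) && (p.2 < 10))%N example_edges by [].
by case/orP=> /(allP small) /andP[] /= -> ->.
Qed.

Lemma interlace_example_base :
  interlace_fuel 10 (LGraph (iota 0 10) example_adj) = example_poly.
Proof.
have sum_nseq (k a : nat) : \sum_(i <- nseq k a) ('X^i : {poly int}) = 'X^a *+ k.
  by elim: k => [|k IH]; rewrite ?big_nil // big_cons IH mulrS.
rewrite interlace_fuel_leaves.
have leaves : perm_eq (interlace_leaves 10 (LGraph (iota 0 10) example_adj))
  (nseq 2 1 ++ nseq 7 2 ++ nseq 6 3 ++ nseq 7 4 ++ nseq 4 5 ++ nseq 3 6 ++ nseq 2 7 ++ nseq 1 8)%N.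
  by vm_compute.
rewrite (perm_big _ leaves) !big_cat !sum_nseq /example_poly !scaler_nat expr1.
by rewrite /= mulr1n !addrA.
Qed.

Lemma example_padding n : (10 <= n)%N ->
  padding (iota 10 (n - 10)) (graph_of (example_rel n)) (LGraph (iota 0 10) example_adj).
Proof.
move=> n_ge10; split=> [|x|x y]; first by rewrite /= -{1}(subnKC n_ge10) iotaD.
  by rewrite !mem_iota => /andP[x_ge10 _]; rewrite negb_and -leqNgt x_ge10.
have adj_sym : example_adj y x = example_adj x y by rewrite /example_adj orbC.
rewrite /adjacent /example_rel !gadj_graph_of -[gadj (LGraph _ _)]/example_adj.
rewrite !mem_iota !add0n adj_sym.
case: (boolP (example_adj x y)) => [adj|_]; last by rewrite !(andbF, orbF).
have /andP[x10 y10] := example_adj_small adj.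
by rewrite x10 y10 (leq_trans x10 n_ge10) (leq_trans y10 n_ge10).
Qed.

Lemma interlace_example n : (10 <= n)%N ->
  interlace_poly (example_rel n) = example_poly * 'X^(n - 10).
Proof.
move=> n_ge10; rewrite interlace_poly_fuel.
rewrite (interlace_fuel_padding n (example_padding n_ge10)) size_iota.
by rewrite -(@interlace_fuel_enough 10) ?size_iota // interlace_example_base.
Qed.

Lemma example_poly_dip : has_dip example_poly 2.
Proof.
have coef : [/\ example_poly`_2 = 7%:R, example_poly`_3 = 6%:R, example_poly`_4 = 7%:R
              & example_poly`_8 = 1].
  by rewrite /example_poly !coefD !coefZ !coefX !coefXn.
case: coef => c2 c3 c4 c8; split; rewrite ?c2 ?c3 ?c4 ?ltr_nat //.
have size_gt8 : (8 < size example_poly)%N.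
  by rewrite ltnNge; apply/negP => /(nth_default 0); rewrite c8 => /eqP; rewrite oner_eq0.
by rewrite -ltnS prednK ?(ltn_trans _ size_gt8).
Qed.

Theorem mainTheorem3 :
  (forall n : nat, (10 <= n)%N ->
     exists e : rel 'I_n, simple_graph e /\ ~ unimodal (interlace_poly e)) /\
  (exists e : rel 'I_10, simple_graph e /\
     interlace_poly e =
       2%:R *: 'X + 7%:R *: 'X^2 + 6%:R *: 'X^3 + 7%:R *: 'X^4
       + 4%:R *: 'X^5 + 3%:R *: 'X^6 + 2%:R *: 'X^7 + 'X^8).
Proof.
split=> [n n_ge10|].
  exists (example_rel n); split; first exact: example_simple.
  rewrite interlace_example //.
  exact: dip_not_unimodal (has_dip_mulXn (n - 10) example_poly_dip).
exists (example_rel 10); split; first exact: example_simple.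
by rewrite interlace_example // subnn expr0 mulr1.
Qed.
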